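(* Let $k\ge4$. For each even natural number $v$ let $\Delta_v$ denote the unique positive solution of $\Delta_v e^{\Delta_v/k}=ke^{1-v/k}$, and put $\tau(k)=\max_{w\in\mathbb N}(k-2\Delta_{2w})/(4w^2)$. Then \[ \tau(k)\ge\frac{1}{9.027901\,k}\qquad\text{and}\qquad \tau(k)\ge\frac{1-2/\omega}{(1-1/\omega+\log\omega+2/k)^2\,k}, \] where $\omega$ is the unique real solution with $\omega\ge1$ of $\omega-2-1/\omega=\log\omega$.
   Context: $\log$ denotes the natural logarithm. (For even $v$ and $k\ge4$, the numbers $\Delta_v$ defined here are admissible exponents for $k$ in the sense of mean values of smooth Weyl sums, so $\tau(k)$ is the quantity entering the minor arc bounds; the claim itself concerns only the numbers so defined.) *)

From Stdlib Require Import Reals ClassicalEpsilon.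
Open Scope R_scope.

Definition Delta (k v : nat) : R :=
  epsilon (inhabits 0%R)
    (fun D => 0 < D /\ D * exp (D / INR k) = INR k * exp (1 - INR v / INR k)).

Definition tau_term (k w : nat) : R :=
  (INR k - 2 * Delta k (2 * w)) / (4 * (INR w) ^ 2).

Definition is_tau_max (k : nat) (t : R) : Prop :=
  (exists w : nat, (1 <= w)%nat /\ t = tau_term k w) /\
  (forall w : nat, (1 <= w)%nat -> tau_term k w <= t).

Definition tau (k : nat) : R := epsilon (inhabits 0%R) (is_tau_max k).

Definition omega : R :=
  epsilon (inhabits 1%R) (fun w => 1 <= w /\ w - 2 - 1 / w = ln w).

(** Both bounds come from a single term of the maximum defining [tau k].
    Since [D |-> D exp(D/k)] is increasing, any [b > 0] with
    [k exp(1 - v/k) <= b exp(b/k)] bounds [Delta_v] by [b].  For [w = k] one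
    may take [b = s k] with [s = 0.27846455 > W(1/e)], which gives
    [tau k >= (1 - 2s)/(4k)].  For the second bound choose [2w] just above
    [k x0], with [x0 = 1 - 1/omega + log omega]: then [b = k/omega] works, and
    [2w <= k x0 + 2] gives the stated bound.  The maximum exists because the
    terms are positive at [w = k] and at most [k/(4w)]. *)

From Pilot Require Import Defs.
From Stdlib Require Import Reals Lra Lia ZArith Exp_prop Factorial ClassicalEpsilon.
Open Scope R_scope.

Lemma INR_pos_of_ge1 (n : nat) : (1 <= n)%nat -> 0 < INR n.
Proof. intros Hn; apply lt_0_INR; lia. Qed.

Lemma exp_le_compat (x y : R) : x <= y -> exp x <= exp y.
Proof.
  intros [Hlt | ->]; [left; apply exp_increasing; exact Hlt | right; reflexivity].
Qed.

Lemma E1_le_exp (x : R) (n : nat) : 0 <= x -> E1 x n <= exp x.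
Proof.
  intros Hx. apply growing_ineq; [|apply E1_cvg].
  intro m. change (E1 x (S m)) with (E1 x m + / INR (fact (S m)) * x ^ S m).
  assert (0 <= / INR (fact (S m)) * x ^ S m).
  { apply Rmult_le_pos; [left; apply Rinv_0_lt_compat, INR_fact_lt_0 | apply pow_le; lra]. }
  lra.
Qed.

Lemma INR_fact_S (n : nat) : INR (fact (S n)) = INR (S n) * INR (fact n).
Proof. rewrite <- mult_INR. reflexivity. Qed.

(* [0.27846455] exceeds the root [W(1/e) = 0.2784645427...] of [s e^s = 1/e]. *)
Lemma exp_neg1_le_num :
  exp (-1) <= 27846455/100000000 * exp (27846455/100000000).
Proof.
  set (s := 27846455/100000000).
  assert (H := E1_le_exp (1 + s) 14 ltac:(unfold s; lra)).
  unfold E1 in H. cbv [sum_f_R0] in H.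
  rewrite !INR_fact_S in H. cbv [fact] in H. rewrite !S_INR in H. cbv [INR pow] in H.
  rewrite exp_plus in H.
  assert (Hinv : exp 1 * exp (-1) = 1)
    by (rewrite <- exp_plus, Rplus_opp_r, exp_0; reflexivity).
  pose proof (exp_pos 1). pose proof (exp_pos (-1)). pose proof (exp_pos s).
  unfold s in *. nra.
Qed.

Lemma mul_exp_div_lt (K a b : R) :
  0 < K -> 0 < a -> a < b -> a * exp (a / K) < b * exp (b / K).
Proof.
  intros HK Ha Hab.
  assert (exp (a / K) < exp (b / K)).
  { apply exp_increasing. unfold Rdiv.
    apply Rmult_lt_compat_r; [apply Rinv_0_lt_compat|]; assumption. }
  pose proof (exp_pos (a / K)). nra.
Qed.

(* Qualified, since [Reals] exports an unrelated [Delta]. *)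
Lemma Delta_spec (k v : nat) : (1 <= k)%nat ->
  0 < Defs.Delta k v /\ Defs.Delta k v * exp (Defs.Delta k v / INR k) = INR k * exp (1 - INR v / INR k).
Proof.
  intros hk. unfold Defs.Delta. apply epsilon_spec.
  pose proof (INR_pos_of_ge1 k hk) as HK.
  set (c := INR k * exp (1 - INR v / INR k)).
  assert (Hc : 0 < c) by (apply Rmult_lt_0_compat; [exact HK | apply exp_pos]).
  assert (Hcont : continuity (fun D => D * exp (D / INR k) - c)) by reg.
  assert (H0 : 0 * exp (0 / INR k) - c < 0) by lra.
  assert (Hcpos : 0 < c * exp (c / INR k) - c).
  { assert (1 < exp (c / INR k)).
    { rewrite <- exp_0. apply exp_increasing. apply Rdiv_lt_0_compat; assumption. }
    nra. }
  destruct (IVT _ 0 c Hcont Hc H0 Hcpos) as [z [[[Hz0 | <-] _] Hz]].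
  - exists z. split; [exact Hz0 | lra].
  - lra.
Qed.

Lemma Delta_le (k v : nat) (b : R) : (1 <= k)%nat -> 0 < b ->
  INR k * exp (1 - INR v / INR k) <= b * exp (b / INR k) -> Defs.Delta k v <= b.
Proof.
  intros hk Hb Hle. destruct (Delta_spec k v hk) as [HD HDeq].
  apply Rnot_lt_le. intros Hlt.
  pose proof (mul_exp_div_lt (INR k) b (Defs.Delta k v) (INR_pos_of_ge1 k hk) Hb Hlt).
  lra.
Qed.

Lemma Delta_diag_le (k : nat) : (1 <= k)%nat ->
  Defs.Delta k (2 * k) <= 27846455/100000000 * INR k.
Proof.
  intros hk. pose proof (INR_pos_of_ge1 k hk) as HK.
  apply Delta_le; [exact hk | lra |].
  rewrite mult_INR.
  replace (1 - INR 2 * INR k / INR k) with (-1) by (simpl; field; lra).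
  replace (27846455/100000000 * INR k / INR k) with (27846455/100000000) by (field; lra).
  pose proof exp_neg1_le_num. nra.
Qed.

Lemma Delta_le_div (k v : nat) (o : R) : (1 <= k)%nat -> 0 < o ->
  INR k * (1 - 1 / o + ln o) <= INR v -> Defs.Delta k v <= INR k / o.
Proof.
  intros hk Ho Hv. pose proof (INR_pos_of_ge1 k hk) as HK.
  apply Delta_le; [exact hk | apply Rdiv_lt_0_compat; assumption |].
  replace (INR k / o / INR k) with (1 / o) by (field; lra).
  assert (Hexp : exp (1 - INR v / INR k) <= exp (1 / o) * exp (- ln o)).
  { rewrite <- exp_plus. apply exp_le_compat.
    assert (1 - 1 / o + ln o <= INR v / INR k).
    { apply (Rmult_le_reg_l (INR k)); [exact HK|].
      replace (INR k * (INR v / INR k)) with (INR v) by (field; lra). exact Hv. }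
    lra. }
  rewrite exp_Ropp, exp_ln in Hexp by exact Ho.
  replace (INR k / o * exp (1 / o)) with (INR k * (exp (1 / o) * / o)) by (field; lra).
  apply Rmult_le_compat_l; lra.
Qed.

Lemma tau_term_le (k w : nat) : (1 <= k)%nat -> (1 <= w)%nat ->
  tau_term k w <= INR k / (4 * INR w).
Proof.
  intros hk hw. unfold tau_term.
  pose proof (INR_pos_of_ge1 k hk). pose proof (le_INR 1 w hw) as HW; simpl in HW.
  destruct (Delta_spec k (2 * w) hk) as [HD _].
  apply (Rmult_le_reg_r (4 * INR w ^ 2)); [nra|].
  replace (INR k / (4 * INR w) * (4 * INR w ^ 2)) with (INR k * INR w) by (field; lra).
  replace ((INR k - 2 * Defs.Delta k (2 * w)) / (4 * INR w ^ 2) * (4 * INR w ^ 2))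
    with (INR k - 2 * Defs.Delta k (2 * w)) by (field; lra).
  nra.
Qed.

Lemma tau_term_ge (k w : nat) (a y : R) : (1 <= k)%nat -> (1 <= w)%nat -> 0 <= a ->
  2 * INR w <= INR k * y -> INR k * a <= INR k - 2 * Defs.Delta k (2 * w) ->
  a / (y ^ 2 * INR k) <= tau_term k w.
Proof.
  intros hk hw Ha Hwy Had. unfold tau_term.
  pose proof (INR_pos_of_ge1 k hk) as HK. pose proof (le_INR 1 w hw) as HW; simpl in HW.
  assert (Hy : 0 < y) by nra.
  assert (Hsq : (2 * INR w) ^ 2 <= (INR k * y) ^ 2) by (apply pow_incr; lra).
  assert (0 < y ^ 2) by (apply pow_lt; exact Hy).
  assert (0 < INR w ^ 2) by (apply pow_lt; lra).
  apply (Rmult_le_reg_r (y ^ 2 * INR k * (4 * INR w ^ 2))); [repeat apply Rmult_lt_0_compat; lra|].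
  replace (a / (y ^ 2 * INR k) * (y ^ 2 * INR k * (4 * INR w ^ 2)))
    with (a * (2 * INR w) ^ 2) by (field; lra).
  replace ((INR k - 2 * Defs.Delta k (2 * w)) / (4 * INR w ^ 2) * (y ^ 2 * INR k * (4 * INR w ^ 2)))
    with ((INR k - 2 * Defs.Delta k (2 * w)) * INR k * y ^ 2) by (field; lra).
  assert (a * (2 * INR w) ^ 2 <= a * (INR k * y) ^ 2) by (apply Rmult_le_compat_l; lra).
  assert (INR k * a * (INR k * y ^ 2) <= (INR k - 2 * Defs.Delta k (2 * w)) * (INR k * y ^ 2))
    by (apply Rmult_le_compat_r; nra).
  nra.
Qed.

Lemma tau_term_diag_ge (k : nat) : (1 <= k)%nat ->
  1 / ((9027901 / 1000000) * INR k) <= tau_term k k.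
Proof.
  intros hk. pose proof (INR_pos_of_ge1 k hk) as HK.
  apply Rle_trans with ((1 - 2 * (27846455/100000000)) / (2 ^ 2 * INR k)).
  - replace (1 / ((9027901 / 1000000) * INR k)) with (1000000 / 9027901 * / INR k)
      by (field; lra).
    replace ((1 - 2 * (27846455/100000000)) / (2 ^ 2 * INR k))
      with ((1 - 2 * (27846455/100000000)) / 4 * / INR k) by (field; lra).
    apply Rmult_le_compat_r; [left; apply Rinv_0_lt_compat; exact HK | lra].
  - pose proof (Delta_diag_le k hk).
    apply tau_term_ge; [exact hk | exact hk | lra | lra | lra].
Qed.

Lemma finite_argmax (f : nat -> R) (N : nat) :
  exists w0, (1 <= w0)%nat /\ forall w, (1 <= w <= N)%nat -> f w <= f w0.
Proof.
  induction N as [|N [w0 [Hw0 Hmax]]].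
  - exists 1%nat. split; [lia | intros w Hw; lia].
  - destruct (Rle_dec (f (S N)) (f w0)) as [Hle | Hgt].
    + exists w0. split; [exact Hw0|]. intros w Hw.
      destruct (Nat.eq_dec w (S N)) as [-> | Hne]; [exact Hle | apply Hmax; lia].
    + exists (S N). split; [lia|]. intros w Hw.
      destruct (Nat.eq_dec w (S N)) as [-> | Hne]; [lra|].
      specialize (Hmax w ltac:(lia)). lra.
Qed.

Lemma exists_argmax_of_dominated (f : nat -> R) (m N : nat) : (1 <= m)%nat ->
  (forall w, (N < w)%nat -> f w <= f m) ->
  exists w0, (1 <= w0)%nat /\ forall w, (1 <= w)%nat -> f w <= f w0.
Proof.
  intros Hm Htail. destruct (finite_argmax f (Nat.max m N)) as [w0 [Hw0 Hmax]].
  exists w0. split; [exact Hw0|]. intros w Hw.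
  destruct (Compare_dec.le_lt_dec w (Nat.max m N)) as [Hle | Hgt].
  - apply Hmax; lia.
  - apply Rle_trans with (f m); [apply Htail; lia | apply Hmax; lia].
Qed.

Lemma tau_term_le_tau (k w : nat) : (1 <= k)%nat -> (1 <= w)%nat -> tau_term k w <= tau k.
Proof.
  intros hk hw. pose proof (INR_pos_of_ge1 k hk) as HK.
  assert (Hex : exists t, is_tau_max k t).
  { set (M := tau_term k k).
    assert (HM : 0 < M).
    { apply Rlt_le_trans with (1 / ((9027901 / 1000000) * INR k));
        [apply Rdiv_lt_0_compat; lra | apply tau_term_diag_ge; exact hk]. }
    destruct (INR_unbounded (INR k / (4 * M))) as [N HN].
    destruct (exists_argmax_of_dominated (tau_term k) k N hk) as [w0 [Hw0 Hmax]].
    - intros v Hv. pose proof (lt_INR N v Hv). pose proof (pos_INR N).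
      apply Rle_trans with (INR k / (4 * INR v)); [apply tau_term_le; [exact hk | lia]|].
      apply (Rmult_le_reg_r (4 * INR v)); [lra|].
      replace (INR k / (4 * INR v) * (4 * INR v)) with (INR k) by (field; lra).
      assert (HkN : INR k <= 4 * M * INR N).
      { apply (Rmult_le_reg_r (/ (4 * M))); [apply Rinv_0_lt_compat; lra|].
        replace (4 * M * INR N * / (4 * M)) with (INR N) by (field; lra). lra. }
      apply Rle_trans with (4 * M * INR N); [exact HkN|].
      change (tau_term k k) with M. nra.
    - exists (tau_term k w0). split; [exists w0; split; [exact Hw0 | reflexivity] | exact Hmax]. }
  exact (proj2 (epsilon_spec (inhabits 0) (is_tau_max k) Hex) w hw).
Qed.

Lemma omega_spec : 1 <= omega /\ omega - 2 - 1 / omega = ln omega.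
Proof.
  unfold omega. apply epsilon_spec.
  (* substituting [omega = exp t] makes the equation continuous on all of [R] *)
  assert (Hcont : continuity (fun t => exp t - 2 - exp (- t) - t)) by reg.
  assert (H0 : exp 0 - 2 - exp (- 0) - 0 < 0) by (rewrite Ropp_0, exp_0; lra).
  assert (H3 : 0 < exp 3 - 2 - exp (- 3) - 3).
  { assert (exp (-3) < 1) by (rewrite <- exp_0; apply exp_increasing; lra).
    assert (Hsq : exp 3 = exp (3/2) * exp (3/2)) by (rewrite <- exp_plus; f_equal; lra).
    pose proof (exp_ineq1 (3/2) ltac:(lra)). nra. }
  destruct (IVT _ 0 3 Hcont ltac:(lra) H0 H3) as [t [[Ht0 _] Ht]].
  exists (exp t). split.
  - rewrite <- exp_0. apply exp_le_compat. exact Ht0.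
  - rewrite ln_exp, exp_Ropp in *. unfold Rdiv. lra.
Qed.

Lemma ln_omega_ge0 : 0 <= ln omega.
Proof.
  rewrite <- ln_1. destruct (proj1 omega_spec) as [Hlt | <-];
    [left; apply ln_increasing; lra | lra].
Qed.

Lemma omega_gt_2 : 2 < omega.
Proof.
  destruct omega_spec as [Ho1 Hoe]. pose proof ln_omega_ge0.
  assert (omega * (omega - 2 - 1 / omega) = omega * omega - 2 * omega - 1) by (field; lra).
  nra.
Qed.

Lemma exists_nat_between (r : R) : 0 < r ->
  exists n : nat, (1 <= n)%nat /\ r <= INR n <= r + 1.
Proof.
  intros Hr. destruct (archimed r) as [Hup1 Hup2].
  assert (Hup : (0 < up r)%Z) by (apply lt_IZR; lra).
  exists (Z.to_nat (up r)).
  rewrite INR_IZR_INZ, Z2Nat.id by lia.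
  split; [lia | lra].
Qed.

Theorem lemma7p1 (k : nat) (hk : (4 <= k)%nat) :
  tau k >= 1 / ((9027901 / 1000000) * INR k) /\
  tau k >= (1 - 2 / omega) / ((1 - 1 / omega + ln omega + 2 / INR k) ^ 2 * INR k).
Proof.
  assert (hk1 : (1 <= k)%nat) by lia.
  pose proof (INR_pos_of_ge1 k hk1) as HK.
  split; apply Rle_ge.
  - apply Rle_trans with (tau_term k k);
      [apply tau_term_diag_ge | apply tau_term_le_tau]; exact hk1.
  - pose proof omega_gt_2 as Ho2. pose proof ln_omega_ge0 as Hln.
    set (x0 := 1 - 1 / omega + ln omega).
    assert (Hinv : / omega < / 2) by (apply Rinv_lt_contravar; lra).
    assert (Hx0 : 0 < x0) by (unfold x0, Rdiv; lra).
    destruct (exists_nat_between (INR k * x0 / 2) ltac:(nra)) as [w [hw [Hlow Hhigh]]].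
    apply Rle_trans with (tau_term k w); [|apply tau_term_le_tau; assumption].
    assert (HD : Defs.Delta k (2 * w) <= INR k / omega).
    { apply Delta_le_div; [exact hk1 | lra |]. rewrite mult_INR; simpl; fold x0; lra. }
    apply tau_term_ge; [exact hk1 | exact hw | | |].
    + unfold Rdiv; lra.
    + replace (INR k * (x0 + 2 / INR k)) with (INR k * x0 + 2) by (field; lra). lra.
    + replace (INR k * (1 - 2 / omega)) with (INR k - 2 * (INR k / omega)) by (field; lra).
      lra.
Qed.
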